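(* For every $n\in\mathbb N$, $2n\,\theta(s_n^2)=4n-2$. In particular $\lim_{n\to\infty}\theta(s_n^2)=2$.
   Context: $F$ is Thompson's group: the group of piecewise linear homeomorphisms of $[0,1]$ with finitely many dyadic breakpoints and slopes powers of $2$, with product $(fg)(t)=g(f(t))$; its standard generators are $x_0$ ($x_0(t)=2t$ on $[0,1/4]$, $t+1/4$ on $[1/4,1/2]$, $t/2+1/2$ on $[1/2,1]$) and $x_{k+1}=\varphi_R(x_k)$, where $\varphi_R(g)(t)=t$ on $[0,1/2]$ and $\tfrac12(1+g(2t-1))$ on $[1/2,1]$. Let $S$ be the set of dyadic rationals $t=\sum_{k=1}^m a_k2^{-k}$ ($a_k\in\{0,1\}$) with $\sum_ka_k$ even; Jones's oriented subgroup is $\vec F=\{g\in F: g(S)=S\}$ (equivalently the set of $g$ whose planar graph is 2-colourable). $\theta:\mathbb C[F]\to\mathbb C$ is the linear functional with $\theta(g)=1$ if $g\in\vec F$ and $\theta(g)=0$ otherwise, for $g\in F$. In $\mathbb C[F]$, $a_k=(x_k+x_k^{-1})/\sqrt2$ and $s_n=(a_0+\dots+a_{n-1})/\sqrt n$. *)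

From HB Require Import structures.
From mathcomp Require Import all_boot all_order all_algebra all_field.
From Stdlib Require Import ClassicalEpsilon.
Set Implicit Arguments. Unset Strict Implicit. Unset Printing Implicit Defensive.
Import Order.TTheory GRing.Theory Num.Theory.
Local Open Scope ring_scope.

(* Elements of F are represented by their action on the rationals of [0,1]
   (a PL map with dyadic breakpoints is determined by it).  *)
Definition Fmap := rat -> rat.

Definition Fmul (f g : Fmap) : Fmap := fun t => g (f t).

Definition x0 : Fmap := fun t =>
  if t <= 1/4 then 2 * t else if t <= 1/2 then t + 1/4 else t / 2 + 1/2.
Definition x0inv : Fmap := fun t =>
  if t <= 1/2 then t / 2 else if t <= 3/4 then t - 1/4 else 2 * t - 1.

Definition phiR (g : Fmap) : Fmap := fun t =>
  if t <= 1/2 then t else (1 + g (2 * t - 1)) / 2.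

(* x_k = phi_R^k(x_0);  x_k^{-1} = phi_R^k(x_0^{-1}) since phi_R is a homomorphism *)
Definition xk (k : nat) : Fmap := iter k phiR x0.
Definition xkinv (k : nat) : Fmap := iter k phiR x0inv.

Definition dyadic_val (a : seq bool) : rat :=
  \sum_(i < size a) (nth false a i)%:R / 2 ^+ i.+1.
Definition inS (t : rat) : Prop :=
  exists a : seq bool, t = dyadic_val a /\ ~~ odd (count id a).

Definition preservesS (g : Fmap) : Prop :=
  (forall t, inS t -> inS (g t)) /\ (forall u, inS u -> exists t, inS t /\ g t = u).

(* theta on group elements: indicator of Jones's oriented subgroup F-> *)
Definition thetaF (g : Fmap) : algC :=
  if excluded_middle_informative (preservesS g) then 1 else 0.

(* Elements of C[F] written as formal linear combinations sum_i c_i g_i. *)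
Definition CF := seq (algC * Fmap).
Definition CFadd (A B : CF) : CF := A ++ B.
Definition CFscale (c : algC) (A : CF) : CF := [seq (c * p.1, p.2) | p <- A].
Definition CFmul (A B : CF) : CF :=
  [seq (p.1 * q.1, Fmul p.2 q.2) | p <- A, q <- B].
Definition CFgen (g : Fmap) : CF := [:: (1, g)].

(* theta extended linearly (well defined on C[F] since it is linear) *)
Definition theta (A : CF) : algC := \sum_(p <- A) p.1 * thetaF p.2.

Definition a_ (k : nat) : CF :=
  CFscale (sqrtC 2)^-1 (CFadd (CFgen (xk k)) (CFgen (xkinv k))).
Definition s_ (n : nat) : CF :=
  CFscale (sqrtC n%:R)^-1 (flatten [seq a_ k | k <- iota 0 n]).

(* Writing points of [0,1] in binary, x_k and x_k^-1 act on bit strings by local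
   rewriting: x_k changes the parity of the number of ones exactly on strings that
   start with k+1 ones, and its output starts with k+2 ones exactly when its input
   starts with k+1 ones; for x_k^-1 the roles of k+1 and k+2 are swapped.  Hence the
   product g h of two signed generators preserves S when the output depth of g equals
   the input depth of h, and otherwise moves some point of S out of S or some point
   outside S into it.  Among the 2n generators x_0^{+-1}, ..., x_(n-1)^{+-1} each depth
   1 and n+1 occurs once and each depth 2..n twice, both as input and as output depth,
   so 1 + 4(n-1) + 1 = 4n-2 of the 4n^2 products lie in the oriented subgroup and
   theta(s_n^2) = (4n-2)/(2n). *)

From mathcomp Require Import all_boot all_order all_algebra all_field.
From mathcomp Require Import ring lra zify.
From Stdlib Require Import ClassicalEpsilon.
Set Implicit Arguments. Unset Strict Implicit. Unset Printing Implicit Defensive.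
Import Order.TTheory GRing.Theory Num.Theory.
Local Open Scope ring_scope.

Local Notation dv := dyadic_val.
Local Notation parity a := (odd (count id a)).

Ltac case_ifs := repeat match goal with |- context [if ?b then _ else _] =>
  let h := fresh "h" in
  destruct b eqn:h; [| move/negbT: h; rewrite -ltNge => h] end.

Lemma dyadic_val_nil : dv [::] = 0.
Proof. by rewrite /dyadic_val big_ord0. Qed.

Lemma dyadic_val_cons b a : dv (b :: a) = ((b : nat)%:R + dv a) / 2.
Proof.
rewrite /dyadic_val /= big_ord_recl /= expr1 mulrDl; congr (_ + _).
rewrite [in RHS]big_distrl /=; apply: eq_bigr => i _.
by rewrite /bump /= add0n exprS invfM mulrA mulrAC.
Qed.

Lemma dyadic_val_bounds a : 0 <= dv a < 1.
Proof.
elim: a => [|b a /andP[ge0 lt1]]; first by rewrite dyadic_val_nil.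
by rewrite dyadic_val_cons; case: b => /=; apply/andP; split; lra.
Qed.

Lemma dyadic_val_eq0 a : dv a = 0 -> count id a = 0%N.
Proof.
elim: a => [//|b a IH]; rewrite dyadic_val_cons => a0.
have /andP[ge0 _] := dyadic_val_bounds a.
by case: b a0 => /= a0; [exfalso; clear IH; lra | rewrite IH //; lra].
Qed.

Lemma dyadic_val_parity a b : dv a = dv b -> parity a = parity b.
Proof.
elim: a b => [|c a IH] [|d b].
- by [].
- by rewrite dyadic_val_nil => /esym /dyadic_val_eq0 ->.
- by rewrite dyadic_val_nil => /dyadic_val_eq0 ->.
rewrite !dyadic_val_cons => ab.
have /andP[a0 a1] := dyadic_val_bounds a; have /andP[b0 b1] := dyadic_val_bounds b.
by case: c ab; case: d => /= ab; first [rewrite (IH b) //; lra | exfalso; lra].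
Qed.

Lemma inS_dyadic_val a : inS (dv a) <-> ~~ parity a.
Proof.
split=> [[b [/dyadic_val_parity -> //]] | even_a]; by exists a.
Qed.

Definition x0_bits (a : seq bool) : seq bool :=
  match a with
  | false :: false :: w => false :: w
  | false :: true :: w => true :: false :: w
  | true :: w => true :: true :: w
  | _ => [::]
  end.

Definition x0inv_bits (a : seq bool) : seq bool :=
  match a with
  | true :: true :: w => true :: w
  | true :: false :: w => false :: true :: w
  | [:: true] => [:: false; true]
  | false :: w => false :: false :: w
  | [::] => [::]
  end.

Definition phiR_bits (G : seq bool -> seq bool) (a : seq bool) : seq bool :=
  match a with
  | true :: w => true :: G w
  | _ => a
  end.

Definition xk_bits k := iter k phiR_bits x0_bits.
Definition xkinv_bits k := iter k phiR_bits x0inv_bits.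

Lemma x0_dyadic a : x0 (dv a) = dv (x0_bits a).
Proof.
case: a => [|b [|c w]]; rewrite /x0.
- by rewrite /= dyadic_val_nil; case_ifs; lra.
- by case: b; rewrite /= !dyadic_val_cons dyadic_val_nil /=; case_ifs; lra.
- have /andP[w0 w1] := dyadic_val_bounds w.
  by case: b; case: c; rewrite /= !dyadic_val_cons /=; case_ifs; lra.
Qed.

Lemma x0inv_dyadic a : x0inv (dv a) = dv (x0inv_bits a).
Proof.
case: a => [|b [|c w]]; rewrite /x0inv.
- by rewrite /= dyadic_val_nil; case_ifs; lra.
- by case: b; rewrite /= !dyadic_val_cons dyadic_val_nil /=; case_ifs; lra.
- have /andP[w0 w1] := dyadic_val_bounds w.
  by case: b; case: c; rewrite /= !dyadic_val_cons /=; case_ifs; lra.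
Qed.

Lemma phiR_dyadic (g : Fmap) G : g 0 = 0 -> (forall a, g (dv a) = dv (G a)) ->
  forall a, phiR g (dv a) = dv (phiR_bits G a).
Proof.
move=> g0 gG [|b w]; rewrite /phiR /=; first by rewrite dyadic_val_nil; case_ifs; lra.
have /andP[w0 w1] := dyadic_val_bounds w.
case: b; rewrite !dyadic_val_cons /=; case_ifs; try lra.
- have w_eq0 : dv w = 0 by lra.
  by rewrite -gG w_eq0 g0; lra.
- have -> : 2 * ((1 + dv w) / 2) - 1 = dv w by field.
  by rewrite gG.
Qed.

Lemma phiR_0 g : phiR g 0 = 0.
Proof. by rewrite /phiR; case_ifs; lra. Qed.

Lemma xk_0 k : xk k 0 = 0.
Proof. by case: k => [|k]; rewrite /xk /= ?phiR_0 // /x0; case_ifs; lra. Qed.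

Lemma xkinv_0 k : xkinv k 0 = 0.
Proof. by case: k => [|k]; rewrite /xkinv /= ?phiR_0 // /x0inv; case_ifs; lra. Qed.

Lemma xk_dyadic k a : xk k (dv a) = dv (xk_bits k a).
Proof.
elim: k a => [|k IH] a; first exact: x0_dyadic.
exact: (phiR_dyadic (xk_0 k) IH).
Qed.

Lemma xkinv_dyadic k a : xkinv k (dv a) = dv (xkinv_bits k a).
Proof.
elim: k a => [|k IH] a; first exact: x0inv_dyadic.
exact: (phiR_dyadic (xkinv_0 k) IH).
Qed.

Definition positive_map (g : Fmap) := forall s, 0 < s -> 0 < g s.

Lemma phiR_positive g : positive_map g -> positive_map (phiR g).
Proof.
move=> g_pos s s_pos; rewrite /phiR; case_ifs; first lra.
have : 0 < g (2 * s - 1) by apply: g_pos; lra.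
lra.
Qed.

Lemma xk_positive k : positive_map (xk k).
Proof.
elim: k => [|k IH]; last exact: phiR_positive.
by move=> s s_pos; rewrite /xk /= /x0; case_ifs; lra.
Qed.

Lemma xkinv_positive k : positive_map (xkinv k).
Proof.
elim: k => [|k IH]; last exact: phiR_positive.
by move=> s s_pos; rewrite /xkinv /= /x0inv; case_ifs; lra.
Qed.

(* Positivity of [h] keeps [phiR h] on the right half, where [phiR g] undoes it. *)
Lemma phiR_can (g h : Fmap) : positive_map h -> cancel h g -> cancel (phiR h) (phiR g).
Proof.
move=> h_pos hK u; rewrite {2}/phiR; case_ifs; first by rewrite /phiR; case_ifs; lra.
have h_gt0 : 0 < h (2 * u - 1) by apply: h_pos; lra.
rewrite /phiR; case_ifs; first lra.
have -> : 2 * ((1 + h (2 * u - 1)) / 2) - 1 = h (2 * u - 1) by field.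
by rewrite hK; field.
Qed.

Lemma xkK k : cancel (xk k) (xkinv k).
Proof.
elim: k => [|k IH]; last exact: (phiR_can (xk_positive k)).
by move=> u; rewrite /xk /xkinv /= /x0 /x0inv; case_ifs; case_ifs; lra.
Qed.

Lemma xkinvK k : cancel (xkinv k) (xk k).
Proof.
elim: k => [|k IH]; last exact: (phiR_can (xkinv_positive k)).
by move=> u; rewrite /xk /xkinv /= /x0 /x0inv; case_ifs; case_ifs; lra.
Qed.

Fixpoint lead_ones (m : nat) (a : seq bool) : bool :=
  if m is m'.+1 then (if a is true :: w then lead_ones m' w else false) else true.

Lemma lead_ones_nseq m r c : ~~ head false c -> lead_ones m (nseq r true ++ c) = (m <= r)%N.
Proof. by move=> c0; elim: r m => [|r IH] [|m] //=; case: c c0 => [|[] c]. Qed.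

Lemma phiR_bits_parity G m :
    (forall a, parity (G a) = parity a (+) lead_ones m a) ->
  forall a, parity (phiR_bits G a) = parity a (+) lead_ones m.+1 a.
Proof. by move=> GP [|[] w] /=; rewrite ?addbF // !add0n GP addNb. Qed.

Lemma xk_bits_parity k a : parity (xk_bits k a) = parity a (+) lead_ones k.+1 a.
Proof.
elim: k a => [|k IH]; last exact: phiR_bits_parity.
by case=> [|[] [|[] w]] //=; rewrite ?addbT ?addbF ?negbK.
Qed.

Lemma xkinv_bits_parity k a : parity (xkinv_bits k a) = parity a (+) lead_ones k.+2 a.
Proof.
elim: k a => [|k IH]; last exact: phiR_bits_parity.
by case=> [|[] [|[] w]] //=; rewrite ?addbT ?addbF ?negbK.
Qed.

Lemma xk_bits_lead_ones k a : lead_ones k.+2 (xk_bits k a) = lead_ones k.+1 a.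
Proof.
elim: k a => [|k IH] a; first by case: a => [|[] [|[] w]].
by case: a => [|[] w] //; exact: IH.
Qed.

Lemma xkinv_bits_lead_ones k a : lead_ones k.+1 (xkinv_bits k a) = lead_ones k.+2 a.
Proof.
elim: k a => [|k IH] a; first by case: a => [|[] [|[] w]].
by case: a => [|[] w] //; exact: IH.
Qed.

Lemma xk_bits_ones k : xk_bits k (nseq k.+1 true) = nseq k.+2 true.
Proof. by elim: k => [//|k IH] /=; rewrite IH. Qed.

Lemma xk_bits_ones_zero k :
  xk_bits k (nseq k true ++ [:: false; true]) = nseq k.+1 true ++ [:: false].
Proof. by elim: k => [//|k IH] /=; rewrite IH. Qed.

Lemma xkinv_bits_ones k : xkinv_bits k (nseq k.+2 true) = nseq k.+1 true.
Proof. by elim: k => [//|k IH] /=; rewrite IH. Qed.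

Lemma xkinv_bits_ones_zero k :
  xkinv_bits k (nseq k.+1 true) = nseq k true ++ [:: false; true].
Proof. by elim: k => [//|k IH] /=; rewrite IH. Qed.

Section BitAction.

Variables (g : Fmap) (G : seq bool -> seq bool).
Hypothesis g_bits : forall a, g (dv a) = dv (G a).

Lemma maps_S_of_bits : (forall a, parity (G a) = parity a) -> forall t, inS t -> inS (g t).
Proof. by move=> GP t [a [-> ?]]; rewrite g_bits inS_dyadic_val GP. Qed.

Lemma not_preservesS_of_bits a :
  injective g -> parity (G a) = ~~ parity a -> ~ preservesS g.
Proof.
move=> g_inj flip [g_into g_onto]; case ea: (parity a).
- have /g_onto [t [[b [tb even_b]] gt]] : inS (dv (G a)).
    by rewrite inS_dyadic_val flip ea.
  move: gt; rewrite -g_bits tb => /g_inj /dyadic_val_parity.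
  by rewrite ea (negbTE even_b).
- have : inS (g (dv a)) by apply: g_into; rewrite inS_dyadic_val ea.
  by rewrite g_bits inS_dyadic_val flip ea.
Qed.

End BitAction.

Definition xgen (p : nat * bool) : Fmap := if p.2 then xkinv p.1 else xk p.1.
Definition xgen_bits (p : nat * bool) := if p.2 then xkinv_bits p.1 else xk_bits p.1.
Definition xgen_inv (p : nat * bool) := (p.1, ~~ p.2).
Definition in_depth (p : nat * bool) := if p.2 then p.1.+2 else p.1.+1.
Definition out_depth (p : nat * bool) := if p.2 then p.1.+1 else p.1.+2.

Lemma xgen_dyadic p a : xgen p (dv a) = dv (xgen_bits p a).
Proof. by case: p => k []; [exact: xkinv_dyadic | exact: xk_dyadic]. Qed.

Lemma xgen_bits_parity p a :
  parity (xgen_bits p a) = parity a (+) lead_ones (in_depth p) a.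
Proof. by case: p => k []; [exact: xkinv_bits_parity | exact: xk_bits_parity]. Qed.

Lemma xgen_bits_lead_ones p a :
  lead_ones (out_depth p) (xgen_bits p a) = lead_ones (in_depth p) a.
Proof. by case: p => k []; [exact: xkinv_bits_lead_ones | exact: xk_bits_lead_ones]. Qed.

Lemma xgenK p : cancel (xgen p) (xgen (xgen_inv p)).
Proof. by case: p => k []; [exact: xkinvK | exact: xkK]. Qed.

Lemma xgen_invK p : cancel (xgen (xgen_inv p)) (xgen p).
Proof. by case: p => k []; [exact: xkK | exact: xkinvK]. Qed.

Lemma in_depth_inv p : in_depth (xgen_inv p) = out_depth p.
Proof. by case: p => k []. Qed.

Lemma out_depth_inv p : out_depth (xgen_inv p) = in_depth p.
Proof. by case: p => k []. Qed.

Lemma xgen_bits_lead_ones_neq p m : out_depth p != m ->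
  exists a, lead_ones (out_depth p) (xgen_bits p a) != lead_ones m (xgen_bits p a).
Proof.
have out_gt0 : (0 < out_depth p)%N by case: p => k [].
have [r_eq r_lt] : (exists a, xgen_bits p a = nseq (out_depth p) true ++ [::]) /\
    exists a c, xgen_bits p a = nseq (out_depth p).-1 true ++ false :: c.
  case: {out_gt0} p => k []; rewrite /xgen_bits /=; split.
  - by exists (nseq k.+2 true); rewrite cats0 xkinv_bits_ones.
  - by exists (nseq k.+1 true), [:: true]; rewrite xkinv_bits_ones_zero.
  - by exists (nseq k.+1 true); rewrite cats0 xk_bits_ones.
  - by exists (nseq k true ++ [:: false; true]), [::]; rewrite xk_bits_ones_zero.
rewrite neq_ltn => /orP[m_gt | m_lt].
- by have [a ac] := r_eq; exists a; rewrite ac !lead_ones_nseq //; lia.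
- by have [a [c ac]] := r_lt; exists a; rewrite ac !lead_ones_nseq //; lia.
Qed.

Lemma xgen_mul_dyadic p q a :
  Fmul (xgen p) (xgen q) (dv a) = dv (xgen_bits q (xgen_bits p a)).
Proof. by rewrite /Fmul !xgen_dyadic. Qed.

Lemma xgen_mul_bits_parity p q a :
  parity (xgen_bits q (xgen_bits p a)) = parity a (+)
    (lead_ones (out_depth p) (xgen_bits p a) (+) lead_ones (in_depth q) (xgen_bits p a)).
Proof. by rewrite !xgen_bits_parity xgen_bits_lead_ones addbA. Qed.

Lemma xgen_mulK p q :
  cancel (Fmul (xgen p) (xgen q)) (Fmul (xgen (xgen_inv q)) (xgen (xgen_inv p))).
Proof. by move=> t; rewrite /Fmul !xgenK. Qed.

Lemma xgen_mulKV p q :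
  cancel (Fmul (xgen (xgen_inv q)) (xgen (xgen_inv p))) (Fmul (xgen p) (xgen q)).
Proof. by move=> t; rewrite /Fmul !xgen_invK. Qed.

Lemma maps_S_xgen_mul p q : out_depth p = in_depth q ->
  forall t, inS t -> inS (Fmul (xgen p) (xgen q) t).
Proof.
move=> pq; apply: maps_S_of_bits (xgen_mul_dyadic p q) _ => a.
by rewrite xgen_mul_bits_parity pq addbb addbF.
Qed.

Lemma preservesS_xgen_mul p q :
  preservesS (Fmul (xgen p) (xgen q)) <-> out_depth p = in_depth q.
Proof.
split=> [pres | pq].
- have [// | pq] := eqVneq (out_depth p) (in_depth q); exfalso.
  have [a lead_neq] := xgen_bits_lead_ones_neq pq.
  apply: (not_preservesS_of_bits (xgen_mul_dyadic p q) (a := a)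
    (can_inj (xgen_mulK p q)) _ pres).
  move: lead_neq; rewrite xgen_mul_bits_parity.
  by case: (lead_ones _ (xgen_bits p a)); case: (lead_ones _ (xgen_bits p a));
    rewrite ?addbT ?addbF.
- split; first exact: maps_S_xgen_mul.
  move=> u Su; exists (Fmul (xgen (xgen_inv q)) (xgen (xgen_inv p)) u).
  split; last exact: xgen_mulKV.
  by apply: maps_S_xgen_mul Su; rewrite out_depth_inv in_depth_inv.
Qed.

Lemma thetaF_xgen_mul p q :
  thetaF (Fmul (xgen p) (xgen q)) = (out_depth p == in_depth q)%:R.
Proof.
rewrite /thetaF; case: excluded_middle_informative => [pres | npres].
  by have /preservesS_xgen_mul -> := pres; rewrite eqxx.
by case: eqP => // /preservesS_xgen_mul.
Qed.

Definition signed_gens n := flatten [seq [:: (k, false); (k, true)] | k <- iota 0 n].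

Lemma signed_gensS n : signed_gens n.+1 = signed_gens n ++ [:: (n, false); (n, true)].
Proof. by rewrite /signed_gens -addn1 iotaD map_cat flatten_cat. Qed.

Lemma count_out_depth (n m : nat) :
  (\sum_(p <- signed_gens n) (out_depth p == m) = (0 < m <= n) + (1 < m <= n.+1))%N.
Proof.
elim: n => [|n IH]; first by rewrite big_nil; lia.
by rewrite signed_gensS big_cat IH !big_cons big_nil /out_depth /=; lia.
Qed.

Lemma count_in_depth (n m : nat) :
  (\sum_(q <- signed_gens n) (m == in_depth q) = (0 < m <= n) + (1 < m <= n.+1))%N.
Proof.
elim: n => [|n IH]; first by rewrite big_nil; lia.
by rewrite signed_gensS big_cat IH !big_cons big_nil /in_depth /=; lia.
Qed.

Lemma count_matching_pairs n :
  (\sum_(p <- signed_gens n) \sum_(q <- signed_gens n) (out_depth p == in_depth q)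
    = 4 * n - 2)%N.
Proof.
elim: n => [|n IH]; first by rewrite big_nil.
rewrite signed_gensS big_cat /=.
rewrite (eq_bigr (fun p => \sum_(q <- signed_gens n) (out_depth p == in_depth q) +
    ((out_depth p == n.+1) + (out_depth p == n.+2)))%N); last first.
  by move=> p _; rewrite big_cat !big_cons big_nil /= addn0.
rewrite big_split /= IH big_split /= !count_out_depth !big_cons big_nil !big_cat.
rewrite !count_in_depth !big_cons !big_nil /out_depth /in_depth /=.
by case: n {IH} => [|n]; lia.
Qed.

Lemma theta_mul_const (I J : Type) (c d : algC) (P : seq I) (Q : seq J) f g :
  theta (CFmul [seq (c, f i) | i <- P] [seq (d, g j) | j <- Q]) =
  c * d * \sum_(i <- P) \sum_(j <- Q) thetaF (Fmul (f i) (g j)).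
Proof.
rewrite /theta /CFmul big_allpairs_dep big_map mulr_sumr; apply: eq_bigr => i _.
by rewrite big_map mulr_sumr; apply: eq_bigr.
Qed.

Lemma s_signed_gens n :
  s_ n = [seq ((sqrtC n%:R)^-1 * ((sqrtC 2)^-1 * 1), xgen p) | p <- signed_gens n].
Proof.
rewrite /s_ /signed_gens map_flatten -map_comp /CFscale map_flatten -!map_comp.
by congr flatten; apply: eq_map.
Qed.

Lemma theta_s_sq n : (0 < n)%N -> theta (CFmul (s_ n) (s_ n)) = 2 - n%:R^-1.
Proof.
move=> n_gt0; rewrite s_signed_gens theta_mul_const.
under eq_bigr do under eq_bigr do rewrite thetaF_xgen_mul.
under eq_bigr do rewrite -natr_sum.
rewrite -natr_sum count_matching_pairs natrB; last by lia.
have n_neq0 : n%:R != 0 :> algC by rewrite pnatr_eq0 -lt0n.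
rewrite !mulr1 mulrACA -!invfM -!expr2 !sqrtCK natrM.
by field.
Qed.

Lemma eventually_invn_lt (R : archiNumFieldType) (eps : R) : 0 < eps ->
  exists N, forall n, (N <= n)%N -> n%:R^-1 < eps.
Proof.
move=> eps_gt0; exists (Num.bound eps^-1).+1 => n N_le_n.
have n_gt0 : (0 < n)%N by apply: leq_trans N_le_n.
rewrite -(invrK eps) ltf_pV2 ?posrE ?invr_gt0 ?ltr0n //.
apply: lt_le_trans (archi_boundP (ltW _)) _; first by rewrite invr_gt0.
by rewrite ler_nat; apply: ltnW.
Qed.

Theorem mainTheorem13 :
  (forall n : nat, (0 < n)%N ->
     2 * n%:R * theta (CFmul (s_ n) (s_ n)) = 4 * n%:R - 2 :> algC) /\
  (forall eps : algC, 0 < eps -> exists N : nat, forall n : nat, (N <= n)%N ->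
     `|theta (CFmul (s_ n) (s_ n)) - 2| < eps).
Proof.
split=> [n n_gt0 | eps eps_gt0].
  have n_neq0 : n%:R != 0 :> algC by rewrite pnatr_eq0 -lt0n.
  by rewrite theta_s_sq //; field.
have [N invn_lt] := eventually_invn_lt eps_gt0.
exists N.+1 => n N_lt_n; have n_gt0 : (0 < n)%N by apply: leq_ltn_trans N_lt_n.
rewrite theta_s_sq // addrAC subrr add0r normrN ger0_norm ?invr_ge0 ?ler0n //.
exact/invn_lt/ltnW.
Qed.
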